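(* Let $D$ be a pv-monoid (idempotent, with symmetric valuation function), $P$ a nonempty finite set of ports, $J$ a nonempty finite index set and $m_j$ ($j\in J$) full monomials over $P$. Then there exists a unique $\overline\gamma\in C(P)$ such that for every $\gamma\in C(P)$: $\left\|\sum_{j\in J}m_j\right\|(\gamma)=1$ if $\gamma=\overline\gamma$, and $\left\|\sum_{j\in J}m_j\right\|(\gamma)=0$ otherwise.
   Context: A pv-monoid $(D,\oplus,\mathrm{val},\otimes,0,1)$ consists of a commutative monoid $(D,\oplus,0)$, a map $\mathrm{val}$ from nonempty finite sequences over $D$ to $D$ with $\mathrm{val}(d)=d$ and $\mathrm{val}(d_1,\dots,d_n)=0$ whenever some $d_i=0$, a binary operation $\otimes$ and an element $1$ with $\mathrm{val}(1,\dots,1)=1$, $0\otimes d=d\otimes0=0$, $1\otimes d=d\otimes1=d$. Standing assumption: $D$ is idempotent and $\mathrm{val}$ is symmetric. $I(P)$ is the set of nonempty subsets of $P$, $C(P)$ the set of nonempty subsets of $I(P)$. PIL formulas: $\phi::=true\mid p\mid\overline{\phi}\mid\phi\vee\phi$ ($p\in P$), $\alpha\models_i p$ iff $p\in\alpha$, negation and disjunction as usual, $\wedge$ via De Morgan. A full monomial is a PIL formula $\bigwedge_{p\in P_+}p\wedge\bigwedge_{p\in P_-}\overline p$ with $P_+\cup P_-=P$, $P_+\cap P_-=\emptyset$. PCL formulas: $f::=true\mid\phi\mid\neg f\mid f\sqcup f\mid f+f$; $\gamma\models\phi$ iff every $\alpha\in\gamma$ satisfies $\phi$; $\neg,\sqcup$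 are complement and union; $\gamma\models f_1+f_2$ iff $\gamma=\gamma_1\cup\gamma_2$ with $\gamma_1,\gamma_2\in C(P)$, $\gamma_1\models f_1,\gamma_2\models f_2$. $\sum_{j\in J}m_j$ is the $+$-combination of the $m_j$. For a PCL formula $f$ viewed as a weighted formula, $\|f\|(\gamma)=1$ if $\gamma\models f$ and $0$ otherwise. *)

From Stdlib Require List Permutation.
From mathcomp Require Import all_boot.
Set Implicit Arguments. Unset Strict Implicit. Unset Printing Implicit Defensive.

(* val is defined on nonempty finite sequences; a nonempty sequence
   d_1,...,d_n is encoded as (d_1, [:: d_2; ...; d_n]). *)
Record pvMonoid := PvMonoid {
  pv_car :> Type;
  pv_add : pv_car -> pv_car -> pv_car;
  pv_val : pv_car -> seq pv_car -> pv_car;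
  pv_mul : pv_car -> pv_car -> pv_car;
  pv_zero : pv_car;
  pv_one : pv_car;
  pv_addA : forall x y z, pv_add x (pv_add y z) = pv_add (pv_add x y) z;
  pv_addC : forall x y, pv_add x y = pv_add y x;
  pv_add0 : forall x, pv_add pv_zero x = x;
  pv_val1 : forall d, pv_val d [::] = d;
  pv_val0 : forall d ds, (d = pv_zero \/ List.In pv_zero ds) -> pv_val d ds = pv_zero;
  pv_val_one : forall n, pv_val pv_one (nseq n pv_one) = pv_one;
  pv_mul0l : forall d, pv_mul pv_zero d = pv_zero;
  pv_mul0r : forall d, pv_mul d pv_zero = pv_zero;
  pv_mul1l : forall d, pv_mul pv_one d = d;
  pv_mul1r : forall d, pv_mul d pv_one = d;
  pv_idem : forall d, pv_add d d = d;
  pv_val_sym : forall d ds e es, Permutation.Permutation (d :: ds) (e :: es) -> pv_val d ds = pv_val e es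
}.

Section PCL.
Variable P : finType.

Definition inI (a : {set P}) : bool := a != set0.
Definition inC (g : {set {set P}}) : bool := (g != set0) && [forall a in g, inI a].

Inductive pil : Type :=
| PTrue : pil
| PVar : P -> pil
| PNot : pil -> pil
| POr : pil -> pil -> pil.

Fixpoint pil_sat (a : {set P}) (phi : pil) : bool :=
  match phi with
  | PTrue => true
  | PVar p => p \in a
  | PNot f => ~~ pil_sat a f
  | POr f g => pil_sat a f || pil_sat a g
  end.

Definition PAnd (f g : pil) : pil := PNot (POr (PNot f) (PNot g)).

(** full monomial with P_+ = Pplus and P_- = P \ Pplus:
    /\_{p in P+} p /\ /\_{p in P-} ~p  (conjunction over an enumeration of P) *)
Definition full_monomial (Pplus : {set P}) : pil :=
  foldr (fun p acc => PAnd (if p \in Pplus then PVar p else PNot (PVar p)) acc)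
        PTrue (enum P).

Inductive pcl : Type :=
| CTrue : pcl
| CPil : pil -> pcl
| CNeg : pcl -> pcl
| CJoin : pcl -> pcl -> pcl
| CPlus : pcl -> pcl -> pcl.

Fixpoint pcl_sat (g : {set {set P}}) (f : pcl) : bool :=
  match f with
  | CTrue => true
  | CPil phi => [forall a in g, pil_sat a phi]
  | CNeg f1 => ~~ pcl_sat g f1
  | CJoin f1 f2 => pcl_sat g f1 || pcl_sat g f2
  | CPlus f1 f2 =>
      [exists g1 : {set {set P}}, exists g2 : {set {set P}},
         [&& inC g1, inC g2, g == g1 :|: g2, pcl_sat g1 f1 & pcl_sat g2 f2]]
  end.

(** +-combination of a nonempty list of formulas (f1 + (f2 + ... + fn));
    the value on the empty list is irrelevant (never used). *)
Fixpoint pcl_plus_seq (s : seq pcl) : pcl :=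
  match s with
  | [::] => CTrue
  | [:: f] => f
  | f :: s' => CPlus f (pcl_plus_seq s')
  end.

Definition pcl_sum (J : finType) (m : J -> pcl) : pcl :=
  pcl_plus_seq [seq m j | j <- enum J].

(** PCL formula viewed as a weighted formula over D *)
Definition wsem (D : pvMonoid) (f : pcl) (g : {set {set P}}) : D :=
  if pcl_sat g f then pv_one D else pv_zero D.

End PCL.

From mathcomp Require Import all_boot.
Set Implicit Arguments. Unset Strict Implicit. Unset Printing Implicit Defensive.

(* A full monomial is satisfied by exactly one interaction, its set of positive
   ports, so as a PCL formula it holds exactly on the singleton configuration
   of that interaction. A +-combination of formulas each holding on a single
   configuration holds exactly on their union, so the sum of the m_j holds on
   the single configuration {P_+(j) | j in J}. *)

Lemma set_seq_map_enum (J T : finType) (m : J -> T) :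
  [set:: [seq m j | j <- enum J]] = [set m j | j : J].
Proof.
apply/setP => x; rewrite inE.
by apply/mapP/imsetP => -[j _ ->]; exists j; rewrite ?mem_enum.
Qed.

Section FullMonomials.
Variable P : finType.
Implicit Types (A a : {set P}) (g : {set {set P}}).

Lemma pil_sat_full_monomial A a : pil_sat a (full_monomial A) = (a == A).
Proof.
have -> : pil_sat a (full_monomial A) = all (fun p => (p \in a) == (p \in A)) (enum P).
  rewrite /full_monomial; elim: (enum P) => [|p s IH] //=.
  by rewrite IH negb_or !negbK; case: (p \in A) => /=; case: (p \in a).
apply/allP/eqP => [eq_aA | ->]; last by move=> p _; rewrite eqxx.
by apply/setP => p; apply/eqP/eq_aA; rewrite mem_enum.
Qed.

Lemma inCE g : inC g = (g != set0) && (set0 \notin g).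
Proof.
congr (_ && _); apply/forall_inP/negP => [nz_g g0 | g0 a ag]; first exact: (negP (nz_g _ g0)).
by apply: contra_not_neq g0 => <-.
Qed.

Lemma inC_set_seq (s : seq {set P}) : inC [set:: s] = (s != [::]) && (set0 \notin s).
Proof.
rewrite inCE inE; congr (_ && _); case: s => [|A s]; first by rewrite set_nil eqxx.
by apply/set0Pn; exists A; rewrite inE mem_head.
Qed.

Lemma pcl_sat_full_monomial A g :
  g != set0 -> pcl_sat g (CPil (full_monomial A)) = (g == [set A]).
Proof.
move=> nz_g /=; under eq_forallb_in do rewrite pil_sat_full_monomial.
apply/forall_inP/eqP => [g_A | -> a]; last by rewrite in_set1.
apply/setP => a; rewrite in_set1; apply/idP/eqP => [/g_A/eqP // | ->].
by case/set0Pn: nz_g => b bg; rewrite -(eqP (g_A b bg)).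
Qed.

Lemma pcl_sat_plus_exact (f1 f2 : pcl P) (G1 G2 : {set {set P}}) :
    inC G1 -> inC G2 ->
    (forall g, inC g -> pcl_sat g f1 = (g == G1)) ->
    (forall g, inC g -> pcl_sat g f2 = (g == G2)) ->
  forall g, pcl_sat g (CPlus f1 f2) = (g == G1 :|: G2).
Proof.
move=> G1C G2C sat1 sat2 g /=; apply/existsP/eqP => [[g1 /existsP [g2]] | ->].
  by case/and5P=> g1C g2C /eqP ->; rewrite sat1 // sat2 // => /eqP -> /eqP ->.
by exists G1; apply/existsP; exists G2; rewrite G1C G2C sat1 // sat2 // !eqxx.
Qed.

Lemma pcl_sat_plus_seq_full_monomials (s : seq {set P}) g :
    s != [::] -> set0 \notin s -> inC g ->
  pcl_sat g (pcl_plus_seq [seq CPil (full_monomial A) | A <- s]) = (g == [set:: s]).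
Proof.
elim: s g => // A [_ g _ _ /andP [nz_g _] | B s IH g _ A_s_nz _].
  by rewrite set_seq1; apply: pcl_sat_full_monomial.
have [A_nz s_nz] : A != set0 /\ set0 \notin B :: s.
  by move: A_s_nz; rewrite inE negb_or eq_sym => /andP.
rewrite set_cons -set_seq1; apply: pcl_sat_plus_exact => [||g' /andP [nz_g' _]|g'].
- by rewrite inC_set_seq /= mem_seq1 eq_sym.
- by rewrite inC_set_seq.
- by rewrite set_seq1; apply: pcl_sat_full_monomial.
- exact: IH.
Qed.

Lemma inC_imset (J : finType) (m : J -> {set P}) :
  0 < #|J| -> (forall j, m j != set0) -> inC [set m j | j : J].
Proof.
move=> J_gt0 m_nz; rewrite -set_seq_map_enum inC_set_seq; apply/andP; split.
  by move: J_gt0; rewrite cardE; case: (enum J).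
by apply/mapP => -[j _ /esym]; apply/eqP.
Qed.

Lemma pcl_sat_sum_full_monomials (J : finType) (m : J -> {set P}) g :
    0 < #|J| -> (forall j, m j != set0) -> inC g ->
  pcl_sat g (pcl_sum (fun j => CPil (full_monomial (m j)))) = (g == [set m j | j : J]).
Proof.
move=> J_gt0 m_nz gC; have := inC_imset J_gt0 m_nz.
rewrite -set_seq_map_enum inC_set_seq => /andP [nz_s s_nz].
rewrite /pcl_sum (map_comp (fun A => CPil (full_monomial A))).
by rewrite pcl_sat_plus_seq_full_monomials ?set_seq_map_enum.
Qed.

End FullMonomials.

Theorem mainTheorem10 (D : pvMonoid) (hD : pv_zero D <> pv_one D)
  (P : finType) (hP : 0 < #|P|) (J : finType) (hJ : 0 < #|J|)
  (Pplus : J -> {set P}) (hPplus : forall j, Pplus j != set0) :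
  exists! gbar : {set {set P}},
    inC gbar /\
    forall g : {set {set P}}, inC g ->
      wsem D (pcl_sum (fun j => CPil (full_monomial (Pplus j)))) g
      = (if g == gbar then pv_one D else pv_zero D).
Proof.
set gbar := [set Pplus j | j : J].
have gbarC : inC gbar by apply: inC_imset.
have semE g : inC g -> wsem D (pcl_sum (fun j => CPil (full_monomial (Pplus j)))) g
                       = (if g == gbar then pv_one D else pv_zero D).
  by move=> gC; rewrite /wsem pcl_sat_sum_full_monomials.
exists gbar; split=> [|g [_ sem_g]]; first by split.
have := sem_g gbar gbarC; rewrite semE // eqxx.
by case: eqP => [-> | _ /esym].
Qed.
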